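(* Let $d\ge 1$ and $k\ge d-1$ be integers. Then every injective function $f\colon S^k\to\mathbb{R}^d$ (not assumed continuous) satisfies $\alpha(f)\ge c_{d-1,k}$.
   Context: For a topological space $X$ and a metric space $Y$, the modulus of discontinuity of a function $g\colon X\to Y$ is $\delta(g)=\inf\{\delta\ge 0 : \text{for every } x\in X \text{ there is an open neighborhood } U_x \text{ of } x \text{ with } \operatorname{diam}(g(U_x))\le\delta\}$. The unit sphere $S^{m}$ carries the geodesic (angle) metric $d(u,v)=\arccos\langle u,v\rangle$. For a topological space $X$, $\mathrm{Conf}_2(X)=\{(x,y)\in X\times X: x\neq y\}$ with the subspace topology. For an injective function $f\colon X\to\mathbb{R}^d$, define $\Phi_f\colon \mathrm{Conf}_2(X)\to S^{d-1}$ by $\Phi_f(x,y)=\frac{f(x)-f(y)}{\|f(x)-f(y)\|}$ and $\alpha(f)=\delta(\Phi_f)$. For a metric space $Y$ and $r\ge 0$, the Vietoris–Rips complex $\mathrm{VR}(Y;r)$ is the simplicial complex with vertex set $Y$ whose simplices are the finite subsets of $Y$ of diameter $\le r$ (considered via its geometric realization). For integers $k\ge n\ge 0$, $c_{n,k}=\inf\{r\ge 0: \text{there exists a continuous map } S^k\to\mathrm{VR}(S^n;r) \text{ commuting with the } \mathbb{Z}/2\text{-actions}\}$, where $\mathbb{Z}/2$ acts antipodally on $S^k$ and on $\mathrm{VR}(S^n;r)$ via the simplicial map induced by the antipodal map of $S^n$. *)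

From HB Require Import structures.
From mathcomp Require Import all_boot all_order all_algebra.
From mathcomp Require Import all_classical all_reals all_analysis.
Set Implicit Arguments. Unset Strict Implicit. Unset Printing Implicit Defensive.
Import Order.TTheory GRing.Theory Num.Theory.
Import numFieldNormedType.Exports.
Local Open Scope classical_set_scope.
Local Open Scope ring_scope.

Section Defs.
Variable R : realType.

Definition dot (m : nat) (u v : 'rV[R]_m) : R := \sum_(i < m) u 0 i * v 0 i.
Definition enorm (m : nat) (u : 'rV[R]_m) : R := Num.sqrt (dot u u).

(* unit sphere in R^m (so S^n = usph n.+1) *)
Definition usph (m : nat) : set 'rV[R]_m := [set u | dot u u = 1].

Definition gdist (m : nat) (u v : 'rV[R]_m) : R := acos (dot u v).

(* modulus of discontinuity of g : X -> Y, X a subspace of a topological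
   space T, Y with a metric dist; diam(g(U)) <= delta is unfolded as
   "all pairwise distances of points of g(U) are <= delta". Open
   neighbourhoods in the subspace X are the traces O `&` X of open O. *)
Definition moddisc_set (T : topologicalType) (X : set T) (Y : Type)
  (dist : Y -> Y -> R) (g : T -> Y) : set R :=
  [set delta | 0 <= delta /\
     forall x, X x -> exists O : set T, [/\ open O, O x &
       forall p q, O p -> X p -> O q -> X q -> dist (g p) (g q) <= delta]].

Definition moddisc (T : topologicalType) (X : set T) (Y : Type)
  (dist : Y -> Y -> R) (g : T -> Y) : \bar R :=
  ereal_inf [set d%:E | d in moddisc_set X dist g].

Definition conf2 (k : nat) : set ('rV[R]_k.+1 * 'rV[R]_k.+1) :=
  [set p | [/\ usph p.1, usph p.2 & p.1 <> p.2]].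

Definition Phi (k d : nat) (f : 'rV[R]_k.+1 -> 'rV[R]_d)
  (p : 'rV[R]_k.+1 * 'rV[R]_k.+1) : 'rV[R]_d :=
  (enorm (f p.1 - f p.2))^-1 *: (f p.1 - f p.2).

Definition alpha (k d : nat) (f : 'rV[R]_k.+1 -> 'rV[R]_d) : \bar R :=
  moddisc (@conf2 k) (@gdist d) (Phi f).

(* Geometric realization of VR(S^{m-1}; r): points are barycentric
   coordinate functions t : R^m -> R, nonnegative, finitely supported,
   summing to 1, whose support is a simplex (subset of the sphere of
   diameter <= r). *)
Definition vr_real (m : nat) (r : R) : set ('rV[R]_m -> R) :=
  [set t | (forall x, 0 <= t x) /\
     (forall x y, t x != 0 -> t y != 0 -> usph x /\ gdist x y <= r) /\
     exists s : seq 'rV[R]_m, [/\ uniq s, (forall x, t x != 0 -> x \in s) &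
        \sum_(x <- s) t x = 1]].

Definition stdsimplex (n : nat) : set 'rV[R]_n :=
  [set l | (forall i, 0 <= l 0 i) /\ \sum_(i < n) l 0 i = 1].

(* characteristic map of the simplex with (ordered) vertex list s *)
Definition charmap (m : nat) (s : seq 'rV[R]_m) (l : 'rV[R]_(size s))
  : 'rV[R]_m -> R :=
  fun x => \sum_(i < size s | s`_i == x) l 0 i.

Definition vr_simplex (m : nat) (r : R) (s : seq 'rV[R]_m) : Prop :=
  uniq s /\ forall x y, x \in s -> y \in s -> usph x /\ gdist x y <= r.

(* open sets of the realization for the weak (coherent) topology *)
Definition vr_open (m : nat) (r : R) (U : set ('rV[R]_m -> R)) : Prop :=
  U `<=` vr_real r /\
  forall s, vr_simplex r s -> exists O : set 'rV[R]_(size s),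
    open O /\ forall l, stdsimplex l -> (U (charmap l) <-> O l).

Definition vr_cont (k m : nat) (r : R) (g : 'rV[R]_k.+1 -> ('rV[R]_m -> R))
  : Prop :=
  (forall x, usph x -> vr_real r (g x)) /\
  forall U, vr_open r U -> exists O : set 'rV[R]_k.+1,
    open O /\ forall x, usph x -> (U (g x) <-> O x).

(* Z/2-equivariance: antipodal map on S^k, induced simplicial map on VR *)
Definition vr_equiv (k m : nat) (g : 'rV[R]_k.+1 -> ('rV[R]_m -> R)) : Prop :=
  forall x, usph x -> g (- x) = (fun y => g x (- y)).

Definition c_nk (n k : nat) : \bar R :=
  ereal_inf [set r%:E | r in [set r : R | 0 <= r /\
     exists g : 'rV[R]_k.+1 -> ('rV[R]_n.+1 -> R),
       vr_cont r g /\ vr_equiv g]].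

End Defs.

From HB Require Import structures.
From mathcomp Require Import all_boot all_order all_algebra.
From mathcomp Require Import all_classical all_reals all_analysis.
From mathcomp Require Import lra.
Import Order.TTheory GRing.Theory Num.Theory.
Import numFieldNormedType.Exports.
Local Open Scope classical_set_scope.
Local Open Scope ring_scope.
Set Implicit Arguments. Unset Strict Implicit. Unset Printing Implicit Defensive.

(* If r bounds the modulus of discontinuity of Phi_f, then the odd map
   V z := Phi_f (z, -z) from S^k to S^(d-1) varies by at most r on small balls:
   for z near y the pairs (z, -z) stay in a neighbourhood of (y, -y) in Conf_2.
   Cover the compact sphere by finitely many balls B(c, e), closed under the
   antipodal map, such that V varies by at most r on each B(c, 3e), and let
   x |-> sum_c tent_c(x) [V c], with tents max(0, e - |c - x|), normalised.
   Two balls meeting at x both lie in the threefold enlargement of the larger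
   one, so the vertices V c carrying weight at x span a simplex of VR(S^(d-1); r);
   the map is continuous on every simplex and commutes with the antipodal maps,
   whence c_(d-1,k) <= r. *)

Lemma filter_all_in (T : Type) (F : set_system T) (I : eqType) (s : seq I)
    (P : I -> T -> Prop) : Filter F ->
  (forall i, i \in s -> \forall x \near F, P i x) ->
  \forall x \near F, forall i, i \in s -> P i x.
Proof.
move=> FF; elim: s => [_|i s IH Fs]; first by apply: nearW => x i; rewrite in_nil.
have Fi := Fs i (mem_head i s).
have {}IH : \forall x \near F, forall j, j \in s -> P j x.
  by apply: IH => j js; apply: Fs; rewrite in_cons js orbT.
apply: filterS (filterI Fi IH) => x [Pix Psx] j.
by rewrite in_cons => /predU1P[->|/Psx].
Qed.

Lemma near_continuous_gt (R : realType) (T : topologicalType) (h : T -> R) y a :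
  {for y, continuous h} -> a < h y -> \forall z \near y, a < h z.
Proof. by move=> hc; exact: cvgr_gt. Qed.

Section Sphere.
Variable R : realType.

Lemma dotNN m (u v : 'rV[R]_m) : dot (- u) (- v) = dot u v.
Proof. by apply: eq_bigr => i _; rewrite !mxE mulrNN. Qed.

Lemma dotZZ m (a : R) (u : 'rV[R]_m) : dot (a *: u) (a *: u) = a ^+ 2 * dot u u.
Proof. by rewrite /dot mulr_sumr; apply: eq_bigr => i _; rewrite !mxE; lra. Qed.

Lemma dot_ge0 m (u : 'rV[R]_m) : 0 <= dot u u.
Proof. by apply: sumr_ge0 => i _; rewrite -expr2 sqr_ge0. Qed.

Lemma dot_eq0 m (u : 'rV[R]_m) : dot u u = 0 -> u = 0.
Proof.
move=> /eqP; rewrite psumr_eq0 => [/allP u0|i _]; last by rewrite -expr2 sqr_ge0.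
apply/rowP => i; have /implyP := u0 i (mem_index_enum i).
by rewrite mxE mulf_eq0 orbb => /(_ isT)/eqP.
Qed.

Lemma enormN m (u : 'rV[R]_m) : enorm (- u) = enorm u.
Proof. by rewrite /enorm dotNN. Qed.

Lemma gdistNN m (u v : 'rV[R]_m) : gdist (- u) (- v) = gdist u v.
Proof. by rewrite /gdist dotNN. Qed.

Lemma usphN m (u : 'rV[R]_m) : usph u -> usph (- u).
Proof. by rewrite /usph /= dotNN. Qed.

Lemma usph_neqN m (u : 'rV[R]_m) : usph u -> u <> - u.
Proof.
move=> hu uN; have u0 : u = 0.
  by apply/rowP => i; have := congr1 (fun M : 'rV[R]_m => M 0 i) uN; rewrite !mxE; lra.
by move: hu; rewrite /usph /= u0 /dot big1 => [/esym/eqP|i _]; rewrite ?oner_eq0 ?mxE ?mul0r.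
Qed.

Lemma usph_normr_le1 m (x : 'rV[R]_m) : usph x -> `|x| <= 1.
Proof.
move=> hx; rewrite [leLHS]/Num.Def.normr /= mx_normrE.
apply: bigmax_le => // -[i j] _ /=; rewrite ord1.
have : x 0 j * x 0 j <= 1.
  rewrite -hx /dot (bigD1 j) //= lerDl.
  by apply: sumr_ge0 => i0 _; rewrite -expr2 sqr_ge0.
rewrite ler_norml => h; apply/andP; split; nra.
Qed.

Lemma compact_usph m : compact (@usph R m).
Proof.
apply: bounded_closed_compact.
  exists 1; split; first by rewrite num_real.
  by move=> M hM x hx; apply: (le_trans (usph_normr_le1 hx)); exact: ltW.
apply: (@preimage_closed _ _ (fun u : 'rV[R]_m => dot u u) [set 1]); last exact: closed_eq.
move=> u _; apply: continuous_big; first exact: add_continuous.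
move=> i _ v; apply: (@continuousM R _ (fun u : 'rV[R]_m => u 0 i) (fun u => u 0 i));
  exact: coord_continuous.
Qed.

Lemma usph_finite_cover m (e : 'rV[R]_m -> R) : (forall y, usph y -> 0 < e y) ->
  exists2 Y : seq 'rV[R]_m, (forall y, y \in Y -> usph y) &
    forall x, usph x -> exists2 y, y \in Y & `|y - x| < e y.
Proof.
move=> e_gt0; have := @compact_usph m; rewrite compact_cover.
case/(_ _ (@usph R m) (fun y => ball y (e y))) => [y _|x hx|D DS cov].
- exact: ball_open.
- by exists x => //; exact: ballxx (e_gt0 x hx).
exists (finmap.enum_fset D) => [y /DS|x /cov[y hy]]; first by rewrite inE.
by rewrite -ball_normE; exists y.
Qed.

Lemma Phi_swap k d (f : 'rV[R]_k.+1 -> 'rV[R]_d) a b : Phi f (b, a) = - Phi f (a, b).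
Proof. by rewrite /Phi /= -(opprB (f a)) enormN scalerN. Qed.

Lemma Phi_usph k d (f : 'rV[R]_k.+1 -> 'rV[R]_d) a b : f a <> f b -> usph (Phi f (a, b)).
Proof.
move=> fab; rewrite /usph /Phi /= dotZZ /enorm exprVn sqr_sqrtr ?dot_ge0 // mulVf //.
by apply/eqP => /dot_eq0/eqP; rewrite subr_eq0 => /eqP.
Qed.

Lemma dist_continuous m (c : 'rV[R]_m) : continuous (fun x : 'rV[R]_m => `|c - x|).
Proof.
move=> x; have cB : {for x, continuous (fun y : 'rV[R]_m => c - y)}.
  by apply: continuousB; [exact: cst_continuous | exact: cvg_id].
exact: continuous_comp cB (@norm_continuous _ _ _).
Qed.

End Sphere.

Section LocalBound.
Variables (R : realType) (k m : nat) (V : 'rV[R]_k.+1 -> 'rV[R]_m) (r : R).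

Definition local_bound (y : 'rV[R]_k.+1) (e : R) : Prop :=
  forall z z', usph z -> usph z' -> `|y - z| < e -> `|y - z'| < e ->
    gdist (V z) (V z') <= r.

Lemma local_boundN y e : (forall z, V (- z) = - V z) ->
  local_bound y e -> local_bound (- y) e.
Proof.
move=> V_odd hy z z' hz hz'.
have normNB w : `|- y - w| = `|y - - w| by rewrite -normrN opprD !opprK.
rewrite !normNB -gdistNN -!V_odd => hyz hyz'.
by apply: hy => //; exact: usphN.
Qed.

End LocalBound.

(* Balls are encoded as (centre, radius) pairs. *)
Definition ballN (R : realType) m (p : 'rV[R]_m * R) := (- p.1, p.2).

Lemma ballNK (R : realType) m : involutive (@ballN R m).
Proof. by case=> c e; rewrite /ballN /= opprK. Qed.

Section Nerve.
Variables (R : realType) (k m : nat) (V : 'rV[R]_k.+1 -> 'rV[R]_m) (r : R).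
Variable L : seq ('rV[R]_k.+1 * R).
Hypothesis V_usph : forall z, usph z -> usph (V z).
Hypothesis V_odd : forall z, V (- z) = - V z.
Hypothesis L_usph : forall p, p \in L -> usph p.1.
Hypothesis L_gt0 : forall p, p \in L -> 0 < p.2.
Hypothesis L_sym : perm_eq (map (@ballN R _) L) L.
Hypothesis L_bound : forall p, p \in L -> local_bound V r p.1 (3 * p.2).
Hypothesis L_cover : forall x, usph x -> exists2 p, p \in L & `|p.1 - x| < p.2.

Definition tent (p : 'rV[R]_k.+1 * R) x := Num.max 0 (p.2 - `|p.1 - x|).
Definition tent_sum x := \sum_(p <- L) tent p x.
Definition vertex_weight x v := \sum_(p <- L | V p.1 == v) tent p x.
Definition nerve_map x v := vertex_weight x v / tent_sum x.

Lemma tent_ge0 p x : 0 <= tent p x.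
Proof. by rewrite /tent le_max lexx. Qed.

Lemma tent_gt0 p x : (0 < tent p x) = (`|p.1 - x| < p.2).
Proof. by rewrite /tent lt_max ltxx subr_gt0. Qed.

Lemma tent_sum_ge0 x : 0 <= tent_sum x.
Proof. by apply: sumr_ge0 => p _; exact: tent_ge0. Qed.

Lemma tent_sum_gt0 x : usph x -> 0 < tent_sum x.
Proof.
case/L_cover => p hp hpx; rewrite /tent_sum (big_rem p hp) /=.
by apply: ltr_pwDl; [rewrite tent_gt0 | apply: sumr_ge0 => q _; exact: tent_ge0].
Qed.

Lemma nerve_map_ge0 x v : 0 <= nerve_map x v.
Proof. by rewrite divr_ge0 ?tent_sum_ge0 //; apply: sumr_ge0 => p _; exact: tent_ge0. Qed.

Lemma nerve_map_neq0 x v : nerve_map x v != 0 ->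
  exists2 p, p \in L & V p.1 = v /\ `|p.1 - x| < p.2.
Proof.
rewrite mulf_eq0 negb_or => /andP[+ _].
rewrite psumr_neq0 => [/hasP[p hp /andP[/eqP Vp]]|p _]; last exact: tent_ge0.
by rewrite tent_gt0 => hpx; exists p.
Qed.

Lemma sum_nerve_map x s : 0 < tent_sum x -> uniq s ->
  (forall p, p \in L -> `|p.1 - x| < p.2 -> V p.1 \in s) ->
  \sum_(v <- s) nerve_map x v = 1.
Proof.
move=> sum_gt0 s_uniq s_supp; rewrite -mulr_suml.
suff -> : \sum_(v <- s) vertex_weight x v = tent_sum x by rewrite mulfV ?gt_eqF.
rewrite /vertex_weight; under eq_bigr do rewrite big_mkcond /=.
rewrite exchange_big /=; apply: eq_big_seq => p hp.
rewrite -big_mkcond /= -big_filter.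
have [Vp_in|Vp_notin] := boolP (V p.1 \in s).
  rewrite (@eq_filter _ _ (pred1 (V p.1))) => [|v]; last by rewrite /= eq_sym.
  by rewrite filter_pred1_uniq // big_seq1.
have -> : tent p x = 0.
  apply/eqP; rewrite eq_le tent_ge0 andbT leNgt tent_gt0.
  by apply: contra Vp_notin; exact: s_supp.
by rewrite big1.
Qed.

Lemma gdist_vertices p q x : p \in L -> q \in L ->
  `|p.1 - x| <= p.2 -> `|q.1 - x| <= q.2 -> gdist (V p.1) (V q.1) <= r.
Proof.
move=> hp hq hpx hqx.
have hpq : `|p.1 - q.1| <= p.2 + q.2.
  by apply: (le_trans (ler_distD x p.1 q.1)); rewrite (distrC x); exact: lerD.
have p_gt0 := L_gt0 hp; have q_gt0 := L_gt0 hq.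
have hpp : `|p.1 - p.1| = 0 by rewrite subrr normr0.
have hqq : `|q.1 - q.1| = 0 by rewrite subrr normr0.
have [qp|pq] := leP q.2 p.2.
  by apply: (L_bound hp); rewrite ?hpp; by [exact: L_usph | lra].
by apply: (L_bound hq); rewrite ?hqq ?(distrC q.1); by [exact: L_usph | lra].
Qed.

Lemma nerve_map_vr_real x : usph x -> vr_real r (nerve_map x).
Proof.
move=> Sx; split; first exact: nerve_map_ge0.
split.
  move=> _ _ /nerve_map_neq0[p hp [<- hpx]] /nerve_map_neq0[q hq [<- hqx]].
  by split; [exact/V_usph/L_usph | exact: gdist_vertices (ltW hpx) (ltW hqx)].
have vertices_in p : p \in L -> V p.1 \in undup [seq V p.1 | p <- L].
  by move=> hp; rewrite mem_undup; exact: map_f.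
exists (undup [seq V p.1 | p <- L]); split; first exact: undup_uniq.
- by move=> _ /nerve_map_neq0[p hp [<- _]]; exact: vertices_in.
- apply: sum_nerve_map; [exact: tent_sum_gt0 | exact: undup_uniq |].
  by move=> p hp _; exact: vertices_in.
Qed.

Lemma tent_ballN p x : tent p (- x) = tent (ballN p) x.
Proof. by rewrite /tent /= -normrN opprD opprK. Qed.

Lemma big_ballN (P : pred ('rV[R]_k.+1 * R)) (F : 'rV[R]_k.+1 * R -> R) :
  \sum_(p <- L | P (ballN p)) F (ballN p) = \sum_(p <- L | P p) F p.
Proof. by rewrite -big_map; exact: perm_big. Qed.

Lemma nerve_mapN x : nerve_map (- x) = fun v => nerve_map x (- v).
Proof.
apply: funext => v; rewrite /nerve_map /vertex_weight /tent_sum.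
under eq_bigr do rewrite tent_ballN.
under [X in _ / X]eq_bigr do rewrite tent_ballN.
rewrite (big_ballN xpredT (tent^~ x)).
rewrite -(big_ballN (fun p => V p.1 == - v) (tent^~ x)) /=.
by congr (_ / _); apply: eq_bigl => p; rewrite V_odd eqr_opp.
Qed.

Lemma tent_continuous (p : 'rV[R]_k.+1 * R) : continuous (tent p).
Proof.
have -> : tent p = (fun=> 0 : R^o) \max (fun x => p.2 - `|p.1 - x| : R^o) by [].
move=> x; apply: continuous_max; first exact: cst_continuous.
by apply: continuousB; [exact: cst_continuous | exact: dist_continuous].
Qed.

Lemma tent_sum_continuous : continuous tent_sum.
Proof.
apply: continuous_big; first exact: add_continuous.
by move=> p _; exact: tent_continuous.
Qed.

Lemma vertex_weight_continuous v : continuous (vertex_weight ^~ v).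
Proof.
apply: continuous_big; first exact: add_continuous.
by move=> p _; exact: tent_continuous.
Qed.

Lemma nerve_map_continuous v y : 0 < tent_sum y ->
  {for y, continuous (nerve_map ^~ v)}.
Proof.
move=> sum_gt0; apply: continuousM; first exact: vertex_weight_continuous.
by apply: continuousV; [rewrite gt_eqF | exact: tent_sum_continuous].
Qed.

Definition star_vertices x := undup [seq V p.1 | p <- L & `|p.1 - x| <= p.2].

(* On the open set [in_star x], [nerve_map] stays in the simplex [star_vertices x]. *)
Definition in_star x y := 0 < tent_sum y /\
  forall p, p \in L -> p.2 < `|p.1 - x| -> p.2 < `|p.1 - y|.

Definition star_coords x y : 'rV[R]_(size (star_vertices x)) :=
  \row_j nerve_map y (star_vertices x)`_j.

Lemma star_vertices_simplex x : vr_simplex r (star_vertices x).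
Proof.
split=> [|u w]; first exact: undup_uniq.
rewrite !mem_undup => /mapP[p + ->] /mapP[q + ->].
rewrite !mem_filter => /andP[hpx hp] /andP[hqx hq].
by split; [exact/V_usph/L_usph | exact: gdist_vertices hpx hqx].
Qed.

Lemma in_star_refl x : usph x -> in_star x x.
Proof. by move=> Sx; split => //; exact: tent_sum_gt0. Qed.

Lemma in_star_vertices x y p : in_star x y -> p \in L -> `|p.1 - y| < p.2 ->
  V p.1 \in star_vertices x.
Proof.
move=> [_ star_xy] hp hpy; rewrite mem_undup; apply: map_f.
rewrite mem_filter hp andbT leNgt; apply: contraTN hpy => hpx.
by rewrite -leNgt ltW // star_xy.
Qed.

Lemma in_star_nbhs x y : in_star x y -> \forall z \near y, in_star x z.
Proof.
move=> [sum_gt0 star_xy]; near=> z; split.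
  by near: z; exact: (near_continuous_gt (@tent_sum_continuous y) sum_gt0).
near: z; apply: filter_all_in => p hp.
have [/(star_xy p hp) hpy|_] := ltP p.2 `|p.1 - x|.
  by apply: filterS (near_continuous_gt (@dist_continuous _ _ p.1 y) hpy) => w hw _.
by apply: nearW.
Unshelve. all: by end_near. Qed.

Lemma nerve_map_out x y v : in_star x y -> v \notin star_vertices x ->
  nerve_map y v = 0.
Proof.
move=> star_xy; apply: contraNeq => /nerve_map_neq0[p hp [<- hpy]].
exact: in_star_vertices hpy.
Qed.

Lemma nerve_map_charmap x y : in_star x y -> nerve_map y = charmap (star_coords x y).
Proof.
move=> star_xy; apply: funext => v; rewrite /charmap.
under eq_bigr do rewrite mxE.
rewrite -(big_mkord (fun i => (star_vertices x)`_i == v)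
  (fun i => nerve_map y (star_vertices x)`_i)).
rewrite -(big_nth 0 (pred1 v) (nerve_map y)) -big_filter.
have [v_in|v_notin] := boolP (v \in star_vertices x).
  by rewrite filter_pred1_uniq ?undup_uniq // big_seq1.
rewrite (nerve_map_out star_xy v_notin) big1_seq // => w /andP[_].
by rewrite mem_filter => /andP[/eqP ->]; rewrite (negbTE v_notin).
Qed.

Lemma star_coords_simplex x y : in_star x y -> stdsimplex (star_coords x y).
Proof.
move=> star_xy; split=> [i|]; first by rewrite mxE; exact: nerve_map_ge0.
under eq_bigr do rewrite mxE.
rewrite -(big_mkord xpredT (fun i => nerve_map y (star_vertices x)`_i)).
rewrite -(big_nth 0 xpredT (nerve_map y)).
apply: sum_nerve_map; [exact: star_xy.1 | exact: undup_uniq |].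
by move=> p hp hpy; exact: in_star_vertices hpy.
Qed.

Lemma star_coords_continuous x y : in_star x y -> {for y, continuous (star_coords x)}.
Proof.
move=> [sum_gt0 _].
have -> : star_coords x =
    fun z => \sum_(j < size (star_vertices x)) nerve_map z (star_vertices x)`_j *: 'e_j.
  apply: funext => z; rewrite [LHS]row_sum_delta.
  by apply: eq_bigr => j _; rewrite mxE.
apply: cvg_big; first exact: add_continuous.
  exact: nbhs_filter.
move=> j _; have := @continuousZr_tmp R _ _ (nerve_map ^~ (star_vertices x)`_j) 'e_j y
  (nerve_map_continuous sum_gt0).
exact.
Qed.

Lemma nerve_map_vr_cont : vr_cont r nerve_map.
Proof.
split=> [|U [_ U_open]]; first exact: nerve_map_vr_real.
exists [set y | exists x (W : set 'rV[R]_(size (star_vertices x))), [/\ open W,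
  forall l, stdsimplex l -> U (charmap l) <-> W l, in_star x y & W (star_coords x y)]].
split=> [|y Sy].
  rewrite openE => y [x [W [oW UW star_xy Wy]]].
  have near_W : \forall z \near y, W (star_coords x z).
    by apply: (star_coords_continuous star_xy); exact: open_nbhs_nbhs.
  near=> z; exists x, W; split => //; near: z; [exact: in_star_nbhs | exact: near_W].
split=> [Uy|[x [W [_ UW star_xy Wy]]]].
  have [W [oW UW]] := U_open _ (star_vertices_simplex y).
  have star_yy := in_star_refl Sy.
  exists y, W; split => //; apply/UW; first exact: star_coords_simplex.
  by rewrite -nerve_map_charmap.
by rewrite (nerve_map_charmap star_xy); apply/UW => //; exact: star_coords_simplex.
Unshelve. all: by end_near. Qed.

Lemma nerve_map_vr_equiv : vr_equiv nerve_map.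
Proof. by move=> x _; exact: nerve_mapN. Qed.

End Nerve.

Lemma vr_map_of_local_bounds (R : realType) k m (V : 'rV[R]_k.+1 -> 'rV[R]_m) r :
  (forall z, usph z -> usph (V z)) -> (forall z, V (- z) = - V z) ->
  (forall y, usph y -> exists2 e, 0 < e & local_bound V r y e) ->
  exists g : 'rV[R]_k.+1 -> 'rV[R]_m -> R, vr_cont r g /\ vr_equiv g.
Proof.
move=> V_usph V_odd V_local.
have V_local_total y : exists e, usph y -> 0 < e /\ local_bound V r y e.
  have [Sy|nSy] := pselect (usph y); last by exists 0 => /nSy.
  by have [e e_gt0 Ve] := V_local y Sy; exists e.
have [eps eps_spec] := choice V_local_total.
have [Y Y_usph Y_cover] : exists2 Y : seq 'rV[R]_k.+1, (forall y, y \in Y -> usph y) &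
    forall x, usph x -> exists2 y, y \in Y & `|y - x| < eps y / 3.
  by apply: usph_finite_cover => y /eps_spec[e_gt0 _]; rewrite divr_gt0.
pose L0 := [seq (y, eps y / 3) | y <- Y].
pose L := L0 ++ map (@ballN R _) L0.
have L_cases p : p \in L -> exists2 y, y \in Y & p = (y, eps y / 3) \/ p = (- y, eps y / 3).
  rewrite mem_cat => /orP[/mapP[y Yy ->]|/mapP[_ /mapP[y Yy ->] ->]].
    by exists y => //; left.
  by exists y => //; right.
have L_usph p : p \in L -> usph p.1.
  by case/L_cases => y /Y_usph Sy [->|->] //; exact: usphN.
have L_gt0 p : p \in L -> 0 < p.2.
  by case/L_cases => y /Y_usph /eps_spec[e_gt0 _] [->|->]; rewrite divr_gt0.
have L_sym : perm_eq (map (@ballN R _) L) L.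
  by rewrite map_cat (mapK (@ballNK R _)) perm_catC.
have L_bound p : p \in L -> local_bound V r p.1 (3 * p.2).
  have eps_third y : 3 * (eps y / 3) = eps y by lra.
  by case/L_cases => y /Y_usph /eps_spec[_ Ve] [->|->];
    rewrite /= eps_third //; exact: local_boundN.
have L_cover x : usph x -> exists2 p, p \in L & `|p.1 - x| < p.2.
  case/Y_cover => y Yy yx; exists (y, eps y / 3) => //.
  by rewrite mem_cat map_f.
by exists (nerve_map V L); split; [apply: nerve_map_vr_cont | apply: nerve_map_vr_equiv].
Qed.

Section AntipodalDirection.
Variables (R : realType) (k d : nat) (f : 'rV[R]_k.+1 -> 'rV[R]_d).

Definition antipodal_dir z := Phi f (z, - z).

Lemma antipodal_dirN z : antipodal_dir (- z) = - antipodal_dir z.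
Proof. by rewrite /antipodal_dir opprK Phi_swap. Qed.

Lemma conf2_antipodal (z : 'rV[R]_k.+1) : usph z -> conf2 (z, - z).
Proof. by move=> Sz; split => //=; [exact: usphN | exact: usph_neqN]. Qed.

Lemma antipodal_dir_usph :
  (forall x y, usph x -> usph y -> f x = f y -> x = y) ->
  forall z, usph z -> usph (antipodal_dir z).
Proof.
move=> f_inj z Sz; apply: Phi_usph => /f_inj fz.
by apply: (usph_neqN Sz); apply: fz => //; exact: usphN.
Qed.

Lemma antipodal_dir_local_bound r :
  moddisc_set (@conf2 R k) (@gdist R d) (Phi f) r ->
  forall y, usph y -> exists2 e, 0 < e & local_bound antipodal_dir r y e.
Proof.
move=> [_ Phi_disc] y Sy.
have [W [oW Wy W_bound]] := Phi_disc _ (conf2_antipodal Sy).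
have antipodal_cvg : (fun z : 'rV[R]_k.+1 => (z, - z)) @ y --> (y, - y).
  exact: cvg_pair cvg_id (cvgN cvg_id).
have : \forall z \near y, W (z, - z) by apply: antipodal_cvg; exact: open_nbhs_nbhs.
case/nbhs_ballP => e e_gt0 yW; exists e => // z z' Sz Sz' yz yz'.
have W_conf2 w : usph w -> `|y - w| < e -> W (w, - w) /\ conf2 (w, - w).
  by move=> Sw yw; split; [apply: yW; rewrite -ball_normE | exact: conf2_antipodal].
have [Wz Cz] := W_conf2 z Sz yz; have [Wz' Cz'] := W_conf2 z' Sz' yz'.
exact: W_bound.
Qed.

End AntipodalDirection.

Theorem theorem1p2 (R : realType) (d k : nat) :
  (1 <= d)%N -> (d.-1 <= k)%N ->
  forall f : 'rV[R]_k.+1 -> 'rV[R]_d,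
    (forall x y, usph x -> usph y -> f x = f y -> x = y) ->
    (c_nk R d.-1 k <= alpha f)%E.
Proof.
case: d => [//|d] _ _ f f_inj.
apply/ereal_infP => _ [r Phi_disc <-].
apply: ereal_inf_lbound; exists r => //; split; first exact: Phi_disc.1.
apply: vr_map_of_local_bounds (antipodal_dir_usph f_inj) (@antipodal_dirN _ _ _ f) _.
exact: antipodal_dir_local_bound Phi_disc.
Qed.
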